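(* There exists a $2$-regular curve in $\mathbb{E}^4$ which does not admit a generalized Bishop frame of type F.
   Context: A regular curve $\gamma: I\to\mathbb{E}^4$ ($I$ an open interval) is considered with arc-length parametrization; $\mathbb{T}=\gamma'$ is its unit tangent vector. It is $2$-regular if $\mathbb{T}'$ is nowhere vanishing. A frame on $\gamma$ is an ordered orthonormal frame $(\mathbb{T},\mathbb{Z}_1,\mathbb{Z}_2,\mathbb{Z}_3)$ of smooth vector fields along $\gamma$ whose first vector is $\mathbb{T}$; it is identified with the smooth map $\mathbb{Z}: I\to O(4)$ whose rows are these vectors. Its coefficient matrix is the $\mathfrak{o}(4)$-valued function $X$ with $\mathbb{Z}'=X\mathbb{Z}$. A frame is of type F if, after possibly permuting $\mathbb{Z}_1,\mathbb{Z}_2,\mathbb{Z}_3$ (keeping $\mathbb{T}$ first), its coefficient matrix has the form $\begin{pmatrix}0&x_1&0&0\\-x_1&0&x_2&0\\0&-x_2&0&x_3\\0&0&-x_3&0\end{pmatrix}$ for some smooth functions $x_1,x_2,x_3$ (no sign conditions). *)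

From Stdlib Require Import Reals Lra Lia.
From Coquelicot Require Import Coquelicot.
Open Scope R_scope.

Definition in_I (a b : Rbar) (t : R) : Prop := Rbar_lt a t /\ Rbar_lt t b.

Definition smooth_on (a b : Rbar) (f : R -> R) : Prop :=
  forall (n : nat) (t : R), in_I a b t -> ex_derive (Derive_n f n) t.

Definition dot4 (u v : nat -> R) : R :=
  u 0%nat * v 0%nat + u 1%nat * v 1%nat + u 2%nat * v 2%nat + u 3%nat * v 3%nat.

(* A curve gamma : I -> E^4 is given componentwise: gamma i t, i < 4. *)
Definition tangent (gamma : nat -> R -> R) (i : nat) (t : R) : R :=
  Derive (gamma i) t.

Definition arclength_curve (a b : Rbar) (gamma : nat -> R -> R) : Prop :=
  Rbar_lt a b /\
  (forall i, (i < 4)%nat -> smooth_on a b (gamma i)) /\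
  (forall t, in_I a b t ->
     dot4 (fun i => tangent gamma i t) (fun i => tangent gamma i t) = 1).

Definition two_regular (a b : Rbar) (gamma : nat -> R -> R) : Prop :=
  forall t, in_I a b t ->
    exists i, (i < 4)%nat /\ Derive (tangent gamma i) t <> 0.

(* A frame: Z i j t is the j-th component of the i-th frame vector
   (row i of the O(4)-valued map); row 0 is T. *)
Definition is_frame (a b : Rbar) (gamma : nat -> R -> R)
    (Z : nat -> nat -> R -> R) : Prop :=
  (forall i j, (i < 4)%nat -> (j < 4)%nat -> smooth_on a b (Z i j)) /\
  (forall t, in_I a b t -> forall i j, (i < 4)%nat -> (j < 4)%nat ->
     dot4 (fun k => Z i k t) (fun k => Z j k t) = if Nat.eqb i j then 1 else 0) /\
  (forall t, in_I a b t -> forall j, (j < 4)%nat -> Z 0%nat j t = tangent gamma j t).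

Definition Fmatrix (x1 x2 x3 : R) (r c : nat) : R :=
  match r, c with
  | O, S O => x1 | S O, O => - x1
  | S O, S (S O) => x2 | S (S O), S O => - x2
  | S (S O), S (S (S O)) => x3 | S (S (S O)), S (S O) => - x3
  | _, _ => 0
  end.

(* permutation of {0,1,2,3} fixing 0 (i.e. permuting Z1,Z2,Z3, keeping T first) *)
Definition perm_fixing_T (p : nat -> nat) : Prop :=
  p 0%nat = 0%nat /\
  (forall i, (i < 4)%nat -> (p i < 4)%nat) /\
  (forall i j, (i < 4)%nat -> (j < 4)%nat -> p i = p j -> i = j).

(* Type F: after permuting rows by p, the frame W r := Z (p r) satisfies
   W' = X W with X = Fmatrix x1 x2 x3 for smooth x1, x2, x3 (no sign conditions). *)
Definition type_F (a b : Rbar) (Z : nat -> nat -> R -> R) : Prop :=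
  exists (p : nat -> nat) (x1 x2 x3 : R -> R),
    perm_fixing_T p /\
    smooth_on a b x1 /\ smooth_on a b x2 /\ smooth_on a b x3 /\
    forall t, in_I a b t -> forall r j, (r < 4)%nat -> (j < 4)%nat ->
      Derive (Z (p r) j) t =
        Fmatrix (x1 t) (x2 t) (x3 t) r 0%nat * Z (p 0%nat) j t +
        Fmatrix (x1 t) (x2 t) (x3 t) r 1%nat * Z (p 1%nat) j t +
        Fmatrix (x1 t) (x2 t) (x3 t) r 2%nat * Z (p 2%nat) j t +
        Fmatrix (x1 t) (x2 t) (x3 t) r 3%nat * Z (p 3%nat) j t.

From Stdlib Require Import Reals Lra Lia List.
From Coquelicot Require Import Coquelicot.
Open Scope R_scope.

(* Let F(t) = exp(-1/t) for t > 0 and F(t) = 0 otherwise, and take as unit tangent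
   T(t) = (cos t c(t), sin t c(t), sin F(t), sin F(-t)) with c(t) = cos F(t) cos F(-t)
   (coordinates numbered 0..3).  For t > 0 coordinate 3 of T vanishes, for t < 0
   coordinate 2 does, and on each side T, T', T'' are linearly independent.  In a frame
   of type F, T' = x1 Z1 and T'' = x1' Z1 + x1 (-x1 T + x2 Z2); independence forces
   x1 x2 <> 0, so Z2 has vanishing coordinate 3 for small t > 0 and vanishing
   coordinate 2 for small t < 0.  By continuity both vanish at t = 0, where T = e0 and
   T' = e1; orthogonality to T and Z1 kills the other two coordinates, so Z2(0) = 0,
   contradicting |Z2| = 1. *)

Lemma is_derive_eq (f : R -> R) (x l l' : R) : is_derive f x l -> l = l' -> is_derive f x l'.
Proof. now intros H <-. Qed.

Lemma is_derive_Rconst (c x : R) : is_derive (fun _ => c) x 0.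
Proof. apply (is_derive_const c x). Qed.

Lemma is_derive_Rid (x : R) : is_derive (fun t => t) x 1.
Proof. exact (is_derive_id (K := R_AbsRing) x). Qed.

Lemma is_derive_Rplus (f g : R -> R) (x a b : R) :
  is_derive f x a -> is_derive g x b -> is_derive (fun t => f t + g t) x (a + b).
Proof. intros; now apply (is_derive_plus f g). Qed.

Lemma is_derive_Rminus (f g : R -> R) (x a b : R) :
  is_derive f x a -> is_derive g x b -> is_derive (fun t => f t - g t) x (a - b).
Proof. intros; now apply (is_derive_minus f g). Qed.

Lemma is_derive_Ropp (f : R -> R) (x a : R) :
  is_derive f x a -> is_derive (fun t => - f t) x (- a).
Proof. intros; now apply (is_derive_opp f). Qed.

Lemma is_derive_Rcomp (f g : R -> R) (x a b : R) :
  is_derive f (g x) a -> is_derive g x b -> is_derive (fun t => f (g t)) x (a * b).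
Proof.
  intros Hf Hg. eapply is_derive_eq; [exact (is_derive_comp f g x a b Hf Hg)|].
  apply Rmult_comm.
Qed.

Lemma is_derive_cos_comp (f : R -> R) (x a : R) :
  is_derive f x a -> is_derive (fun t => cos (f t)) x (- sin (f x) * a).
Proof. intros; apply (is_derive_Rcomp cos f); auto using is_derive_cos. Qed.

Lemma is_derive_sin_comp (f : R -> R) (x a : R) :
  is_derive f x a -> is_derive (fun t => sin (f t)) x (cos (f x) * a).
Proof. intros; apply (is_derive_Rcomp sin f); auto using is_derive_sin. Qed.

Lemma is_derive_reflect (f : R -> R) (x a : R) :
  is_derive f (- x) a -> is_derive (fun t => f (- t)) x (- a).
Proof.
  intros H. eapply is_derive_eq.
  - apply (is_derive_Rcomp f Ropp); [exact H|]. apply is_derive_Ropp, is_derive_Rid.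
  - ring.
Qed.

Lemma sin_cos_sqr (x : R) : sin x ^ 2 + cos x ^ 2 = 1.
Proof. rewrite <- (sin2_cos2 x). unfold Rsqr. ring. Qed.

Lemma continuous_eq0_of_adherent (f : R -> R) (x : R) :
  continuous f x -> (forall eps, 0 < eps -> exists y, Rabs (y - x) < eps /\ f y = 0) ->
  f x = 0.
Proof.
  intros Hc Hzeros. apply continuity_pt_filterlim in Hc.
  destruct (Req_dec (f x) 0) as [H|H]; [exact H|exfalso].
  destruct (Hc (Rabs (f x)) (Rabs_pos_lt _ H)) as [delta [Hdelta Hball]].
  destruct (Hzeros delta Hdelta) as [y [Hy Hfy]].
  destruct (Req_dec y x) as [->|Hyx]; [exact (H Hfy)|].
  assert (Hdist : R_dist (f y) (f x) < Rabs (f x)).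
  { apply Hball. split; [split; [exact I|congruence]|exact Hy]. }
  unfold R_dist in Hdist. rewrite Hfy, Rminus_0_l, Rabs_Ropp in Hdist. lra.
Qed.

Ltac derive_step :=
  match goal with
  | |- is_derive (fun _ => ?c) _ _ => apply is_derive_Rconst
  | |- is_derive (fun t => t) _ _ => apply is_derive_Rid
  | |- is_derive (fun t => @?f t + @?g t) _ _ => apply (is_derive_Rplus f g)
  | |- is_derive (fun t => @?f t - @?g t) _ _ => apply (is_derive_Rminus f g)
  | |- is_derive (fun t => @?f t * @?g t) _ _ => apply (Derive.is_derive_mult f g)
  | |- is_derive (fun t => - @?f t) _ _ => apply (is_derive_Ropp f)
  | |- is_derive (fun t => cos (@?f t)) _ _ => apply (is_derive_cos_comp f)
  | |- is_derive (fun t => sin (@?f t)) _ _ => apply (is_derive_sin_comp f)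
  | H : forall x, is_derive ?f x _ |- is_derive (fun t => ?f t) _ _ => apply H
  end.

Ltac derive_ring := eapply is_derive_eq; [repeat derive_step | ring].

(** * The flat function exp(-1/t) and its derivatives *)

(* [(c, k)] stands for the term [c (1/t)^k exp(-1/t)]. *)
Fixpoint expinv_sum (L : list (R * nat)) (t : R) : R :=
  match L with
  | nil => 0
  | (c, k) :: L' => c * (/ t) ^ k * exp (- / t) + expinv_sum L' t
  end.

Fixpoint expinv_deriv (L : list (R * nat)) : list (R * nat) :=
  match L with
  | nil => nil
  | (c, k) :: L' => (- (c * INR k), S k) :: (c, S (S k)) :: expinv_deriv L'
  end.

Fixpoint expinv_shift (L : list (R * nat)) : list (R * nat) :=
  match L with nil => nil | (c, k) :: L' => (c, S k) :: expinv_shift L' end.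

Fixpoint expinv_bound (L : list (R * nat)) : R :=
  match L with
  | nil => 0
  | (c, k) :: L' => Rabs c * INR (S k) ^ S k + expinv_bound L'
  end.

Lemma is_derive_expinv_term (c : R) (k : nat) (x : R) : x <> 0 ->
  is_derive (fun t => c * (/ t) ^ k * exp (- / t)) x
    (- (c * INR k) * (/ x) ^ S k * exp (- / x) + c * (/ x) ^ S (S k) * exp (- / x)).
Proof.
  intros Hx. auto_derive; [auto|].
  destruct k as [|k]; [simpl; field; exact Hx|].
  rewrite S_INR. simpl. field. exact Hx.
Qed.

Lemma is_derive_expinv_sum (L : list (R * nat)) (x : R) :
  x <> 0 -> is_derive (expinv_sum L) x (expinv_sum (expinv_deriv L) x).
Proof.
  intros Hx. induction L as [|[c k] L IH]; cbn [expinv_sum expinv_deriv].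
  - apply is_derive_Rconst.
  - eapply is_derive_eq.
    + apply (is_derive_Rplus _ (expinv_sum L)); [apply is_derive_expinv_term, Hx|exact IH].
    + ring.
Qed.

Lemma expinv_sum_shift (L : list (R * nat)) (x : R) :
  x <> 0 -> expinv_sum (expinv_shift L) x = expinv_sum L x / x.
Proof.
  intros Hx. induction L as [|[c k] L IH]; simpl; [field; exact Hx|].
  rewrite IH. field. exact Hx.
Qed.

Lemma pow_div_le_exp (m : nat) (y : R) :
  (0 < m)%nat -> 0 <= y -> (y / INR m) ^ m <= exp y.
Proof.
  intros Hm Hy. assert (HmR : 0 < INR m) by (apply lt_0_INR; exact Hm).
  replace (exp y) with (exp (y / INR m) ^ m).
  - apply pow_incr. split; [apply Rdiv_le_0_compat; lra|].
    pose proof (exp_ineq1_le (y / INR m)). lra.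
  - rewrite <- Rpower_pow by apply exp_pos. unfold Rpower. rewrite ln_exp.
    f_equal. field. lra.
Qed.

Lemma pow_mul_exp_opp_le (k : nat) (y : R) :
  0 < y -> y ^ k * exp (- y) <= INR (S k) ^ S k / y.
Proof.
  intros Hy. set (m := S k).
  assert (Hm : 0 < INR m) by (apply lt_0_INR; unfold m; lia).
  assert (Hmm : 0 < INR m ^ m) by (apply pow_lt; exact Hm).
  pose proof (pow_div_le_exp m y ltac:(unfold m; lia) ltac:(lra)) as Hle.
  unfold Rdiv in Hle. rewrite Rpow_mult_distr, pow_inv in Hle.
  pose proof (exp_pos y). rewrite exp_Ropp.
  apply Rmult_le_reg_r with (exp y * y * / INR m ^ m).
  { apply Rmult_lt_0_compat; [apply Rmult_lt_0_compat; lra|apply Rinv_0_lt_compat; exact Hmm]. }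
  replace (y ^ k * / exp y * (exp y * y * / INR m ^ m)) with (y ^ m * / INR m ^ m)
    by (change (y ^ m) with (y * y ^ k); field; lra).
  replace (INR m ^ m / y * (exp y * y * / INR m ^ m)) with (exp y) by (field; lra).
  exact Hle.
Qed.

Lemma expinv_bound_nonneg (L : list (R * nat)) : 0 <= expinv_bound L.
Proof.
  induction L as [|[c k] L IH]; cbn [expinv_bound]; [lra|].
  pose proof (pow_le (INR (S k)) (S k) (pos_INR _)). pose proof (Rabs_pos c). nra.
Qed.

Lemma expinv_sum_le (L : list (R * nat)) (h : R) :
  0 < h -> Rabs (expinv_sum L h) <= expinv_bound L * h.
Proof.
  intros Hh. induction L as [|[c k] L IH]; cbn [expinv_sum expinv_bound].
  - rewrite Rabs_R0. lra.
  - assert (Hterm : Rabs (c * (/ h) ^ k * exp (- / h)) <= Rabs c * (INR (S k) ^ S k * h)).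
    { rewrite Rmult_assoc, Rabs_mult. apply Rmult_le_compat_l; [apply Rabs_pos|].
      assert (Hi : 0 < / h) by (apply Rinv_0_lt_compat; exact Hh).
      rewrite Rabs_right by (apply Rle_ge, Rmult_le_pos; [apply pow_le|apply Rlt_le, exp_pos]; lra).
      pose proof (pow_mul_exp_opp_le k (/ h) Hi) as H.
      unfold Rdiv in H. rewrite Rinv_inv in H. exact H. }
    pose proof (Rabs_triang (c * (/ h) ^ k * exp (- / h)) (expinv_sum L h)). lra.
Qed.

Lemma is_derive_0_of_le_sqr (f : R -> R) (K : R) :
  (forall h, Rabs (f h) <= K * h ^ 2) -> is_derive f 0 0.
Proof.
  intros Hf. assert (Hf0 : f 0 = 0).
  { specialize (Hf 0). rewrite pow_i, Rmult_0_r in Hf by lia.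
    pose proof (Rabs_pos (f 0)). apply Rabs_eq_0. lra. }
  assert (HK : 0 <= K) by (specialize (Hf 1); pose proof (Rabs_pos (f 1)); simpl in Hf; lra).
  apply is_derive_Reals. intros eps Heps.
  assert (Hd : 0 < eps / (K + 1)) by (apply Rdiv_lt_0_compat; lra).
  exists (mkposreal _ Hd). intros h Hh Hsmall. simpl in Hsmall.
  rewrite Rplus_0_l, Hf0, Rminus_0_r, Rminus_0_r.
  assert (Hq : Rabs (f h / h) <= K * Rabs h).
  { unfold Rdiv. rewrite Rabs_mult, Rabs_inv.
    apply Rmult_le_reg_r with (Rabs h); [apply Rabs_pos_lt, Hh|].
    rewrite Rmult_assoc, Rinv_l by (apply Rabs_no_R0, Hh).
    specialize (Hf h). pose proof (Rsqr_abs h) as Habs. unfold Rsqr in Habs.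
    simpl in Hf. nra. }
  assert (K * Rabs h <= K * (eps / (K + 1))) by (apply Rmult_le_compat_l; lra).
  assert (K * (eps / (K + 1)) < eps).
  { apply Rmult_lt_reg_r with (K + 1); [lra|].
    replace (K * (eps / (K + 1)) * (K + 1)) with (K * eps) by (field; lra). nra. }
  lra.
Qed.

Definition flat (L : list (R * nat)) (t : R) : R :=
  if Rlt_dec 0 t then expinv_sum L t else 0.

Lemma flat_nonpos (L : list (R * nat)) (t : R) : t <= 0 -> flat L t = 0.
Proof. intros Ht. unfold flat. destruct (Rlt_dec 0 t); [lra|reflexivity]. Qed.

Lemma flat_pos (L : list (R * nat)) (t : R) : 0 < t -> flat L t = expinv_sum L t.
Proof. intros Ht. unfold flat. destruct (Rlt_dec 0 t); [reflexivity|lra]. Qed.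

(* [flat L t = t * flat (expinv_shift L) t] turns the linear bound of [expinv_sum_le]
   into a quadratic one, which makes [flat L] differentiable at 0. *)
Lemma flat_le_sqr (L : list (R * nat)) (h : R) :
  Rabs (flat L h) <= expinv_bound (expinv_shift L) * h ^ 2.
Proof.
  pose proof (expinv_bound_nonneg (expinv_shift L)).
  destruct (Rlt_dec 0 h) as [Hh|Hh].
  - rewrite flat_pos by exact Hh.
    replace (expinv_sum L h) with (expinv_sum (expinv_shift L) h * h)
      by (rewrite expinv_sum_shift by lra; field; lra).
    rewrite Rabs_mult, (Rabs_right h) by lra.
    pose proof (expinv_sum_le (expinv_shift L) h Hh). simpl. nra.
  - rewrite flat_nonpos, Rabs_R0 by lra. pose proof (pow2_ge_0 h). nra.
Qed.

Lemma is_derive_flat (L : list (R * nat)) (x : R) :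
  is_derive (flat L) x (flat (expinv_deriv L) x).
Proof.
  destruct (Rtotal_order x 0) as [Hx|[->|Hx]].
  - rewrite flat_nonpos by lra.
    apply (is_derive_ext_loc (fun _ => 0)); [|apply is_derive_Rconst].
    apply (locally_interval _ x m_infty 0); [exact I|exact Hx|].
    intros y _ Hy. symmetry. apply flat_nonpos. simpl in Hy. lra.
  - rewrite flat_nonpos by lra. apply (is_derive_0_of_le_sqr _ _ (flat_le_sqr L)).
  - rewrite flat_pos by exact Hx.
    apply (is_derive_ext_loc (expinv_sum L)); [|apply is_derive_expinv_sum; lra].
    apply (locally_interval _ x 0 p_infty); [exact Hx|exact I|].
    intros y Hy _. symmetry. apply flat_pos. exact Hy.
Qed.

(** * A class of functions closed under differentiation *)

Lemma smooth_of_derive_closed (P : (R -> R) -> Prop) :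
  (forall f, P f -> exists f', P f' /\ forall x, is_derive f x (f' x)) ->
  forall f, P f -> forall (n : nat) (x : R), ex_derive (Derive_n f n) x.
Proof.
  intros Hclosed f Hf.
  assert (Hn : forall n, exists g, P g /\ forall x, Derive_n f n x = g x).
  { induction n as [|n [g [Hg Heq]]]; [now exists f|].
    destruct (Hclosed g Hg) as [g' [Hg' Hder]]. exists g'. split; [exact Hg'|].
    intro x. simpl. rewrite (Derive_ext _ _ x Heq). apply is_derive_unique, Hder. }
  intros n x. destruct (Hn n) as [g [Hg Heq]]. destruct (Hclosed g Hg) as [g' [_ Hder]].
  apply (ex_derive_ext g); [intro t; symmetry; apply Heq|]. exists (g' x). apply Hder.
Qed.

Inductive flat_trig : (R -> R) -> Prop :=
  | flat_trig_id : flat_trig (fun t => t)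
  | flat_trig_const (c : R) : flat_trig (fun _ => c)
  | flat_trig_flat (L : list (R * nat)) : flat_trig (flat L)
  | flat_trig_plus f g : flat_trig f -> flat_trig g -> flat_trig (fun t => f t + g t)
  | flat_trig_mult f g : flat_trig f -> flat_trig g -> flat_trig (fun t => f t * g t)
  | flat_trig_cos f : flat_trig f -> flat_trig (fun t => cos (f t))
  | flat_trig_sin f : flat_trig f -> flat_trig (fun t => sin (f t))
  | flat_trig_reflect f : flat_trig f -> flat_trig (fun t => f (- t))
  | flat_trig_ext f g : flat_trig f -> (forall t, f t = g t) -> flat_trig g.

Lemma flat_trig_opp (f : R -> R) : flat_trig f -> flat_trig (fun t => - f t).
Proof.
  intros Hf. apply (flat_trig_ext (fun t => -1 * f t)); [|intro; ring].
  apply (flat_trig_mult (fun _ => -1)); [apply flat_trig_const|exact Hf].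
Qed.

Lemma flat_trig_derive (f : R -> R) :
  flat_trig f -> exists f', flat_trig f' /\ forall x, is_derive f x (f' x).
Proof.
  induction 1 as [| c | L | f g _ [f' [Hf' Df]] _ [g' [Hg' Dg]]
                 | f g Hf [f' [Hf' Df]] Hg [g' [Hg' Dg]]
                 | f Hf [f' [Hf' Df]] | f Hf [f' [Hf' Df]] | f _ [f' [Hf' Df]]
                 | f g _ [f' [Hf' Df]] Heq].
  - exists (fun _ => 1). split; [apply flat_trig_const|apply is_derive_Rid].
  - exists (fun _ => 0). split; [apply flat_trig_const|intro; apply is_derive_Rconst].
  - exists (flat (expinv_deriv L)). split; [apply flat_trig_flat|apply is_derive_flat].
  - exists (fun t => f' t + g' t). split; [now apply flat_trig_plus|].
    intro; now apply is_derive_Rplus.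
  - exists (fun t => f' t * g t + f t * g' t).
    split; [apply flat_trig_plus; now apply flat_trig_mult|].
    intro; now apply Derive.is_derive_mult.
  - exists (fun t => - (sin (f t) * f' t)).
    split; [now apply flat_trig_opp, flat_trig_mult; [apply flat_trig_sin|]|].
    intro x. eapply is_derive_eq; [now apply is_derive_cos_comp|ring].
  - exists (fun t => cos (f t) * f' t). split; [now apply flat_trig_mult; [apply flat_trig_cos|]|].
    intro; now apply is_derive_sin_comp.
  - exists (fun t => - f' (- t)). split; [now apply flat_trig_opp, flat_trig_reflect|].
    intro; now apply is_derive_reflect.
  - exists f'. split; [exact Hf'|]. intro x. now apply (is_derive_ext f g).
Qed.

Lemma flat_trig_smooth (f : R -> R) :
  flat_trig f -> forall n x, ex_derive (Derive_n f n) x.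
Proof. exact (smooth_of_derive_closed flat_trig flat_trig_derive f). Qed.

Lemma flat_trig_continuous (f : R -> R) (x : R) : flat_trig f -> continuous f x.
Proof.
  intros Hf. apply (ex_derive_continuous (K := R_AbsRing) (V := R_NormedModule)).
  exact (flat_trig_smooth f Hf 0 x).
Qed.

Section Tangent_field.

(* The primes are part of the names; they denote derivatives under the hypotheses of
   section [Derivatives]. *)
Variables f f' f'' g g' g'' : R -> R.

Definition cos_prod (t : R) : R := cos (f t) * cos (g t).
Definition cos_prod' (t : R) : R :=
  - sin (f t) * f' t * cos (g t) - cos (f t) * sin (g t) * g' t.
Definition cos_prod'' (t : R) : R :=
  - cos (f t) * cos (g t) * (f' t ^ 2 + g' t ^ 2) - sin (f t) * f'' t * cos (g t)
  - cos (f t) * sin (g t) * g'' t + 2 * sin (f t) * sin (g t) * f' t * g' t.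

Definition tangent_field (i : nat) : R -> R :=
  match i with
  | 0 => fun t => cos t * cos_prod t
  | 1 => fun t => sin t * cos_prod t
  | 2 => fun t => sin (f t)
  | 3 => fun t => sin (g t)
  | _ => fun _ => 0
  end.

Definition tangent_field' (i : nat) : R -> R :=
  match i with
  | 0 => fun t => - sin t * cos_prod t + cos t * cos_prod' t
  | 1 => fun t => cos t * cos_prod t + sin t * cos_prod' t
  | 2 => fun t => cos (f t) * f' t
  | 3 => fun t => cos (g t) * g' t
  | _ => fun _ => 0
  end.

Definition tangent_field'' (i : nat) : R -> R :=
  match i with
  | 0 => fun t => - cos t * cos_prod t - 2 * sin t * cos_prod' t + cos t * cos_prod'' t
  | 1 => fun t => - sin t * cos_prod t + 2 * cos t * cos_prod' t + sin t * cos_prod'' t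
  | 2 => fun t => - sin (f t) * f' t ^ 2 + cos (f t) * f'' t
  | 3 => fun t => - sin (g t) * g' t ^ 2 + cos (g t) * g'' t
  | _ => fun _ => 0
  end.

Section Derivatives.

Hypotheses (Df : forall x, is_derive f x (f' x)) (Df' : forall x, is_derive f' x (f'' x))
  (Dg : forall x, is_derive g x (g' x)) (Dg' : forall x, is_derive g' x (g'' x)).

Lemma is_derive_cos_prod (x : R) : is_derive cos_prod x (cos_prod' x).
Proof. unfold cos_prod, cos_prod'. derive_ring. Qed.

Lemma is_derive_cos_prod' (x : R) : is_derive cos_prod' x (cos_prod'' x).
Proof. unfold cos_prod', cos_prod''. derive_ring. Qed.

Lemma is_derive_tangent_field (i : nat) (x : R) :
  is_derive (tangent_field i) x (tangent_field' i x).
Proof.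
  pose proof is_derive_cos_prod.
  destruct i as [|[|[|[|i]]]]; simpl; derive_ring.
Qed.

Lemma is_derive_tangent_field' (i : nat) (x : R) :
  is_derive (tangent_field' i) x (tangent_field'' i x).
Proof.
  pose proof is_derive_cos_prod. pose proof is_derive_cos_prod'.
  destruct i as [|[|[|[|i]]]]; simpl; derive_ring.
Qed.

End Derivatives.
End Tangent_field.

Definition minor3 (u v w : nat -> R) (i j k : nat) : R :=
  u i * (v j * w k - v k * w j) - u j * (v i * w k - v k * w i)
  + u k * (v i * w j - v j * w i).

Section Tangent_field_facts.

Variables f f' f'' g g' g'' : R -> R.
Variable t : R.

Lemma tangent_field_unit :
  f t = 0 \/ g t = 0 ->
  dot4 (fun i => tangent_field f g i t) (fun i => tangent_field f g i t) = 1.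
Proof.
  intros Hfg. unfold dot4. simpl. unfold cos_prod.
  destruct Hfg as [Hz | Hz]; rewrite Hz, sin_0, cos_0; [set (x := g t)|set (x := f t)];
    transitivity ((sin t ^ 2 + cos t ^ 2) * cos x ^ 2 + sin x ^ 2); try ring;
    rewrite sin_cos_sqr, Rmult_1_l, Rplus_comm; apply sin_cos_sqr.
Qed.

Lemma tangent_field'_rotated :
  cos t * tangent_field' f f' g g' 1 t - sin t * tangent_field' f f' g g' 0 t = cos_prod f g t.
Proof.
  simpl. transitivity ((sin t ^ 2 + cos t ^ 2) * cos_prod f g t); [ring|].
  rewrite sin_cos_sqr. ring.
Qed.

Lemma tangent_field_minor013_swap :
  minor3 (fun i => tangent_field f g i t) (fun i => tangent_field' f f' g g' i t)
    (fun i => tangent_field'' f f' f'' g g' g'' i t) 0 1 3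
  = minor3 (fun i => tangent_field g f i t) (fun i => tangent_field' g g' f f' i t)
      (fun i => tangent_field'' g g' g'' f f' f'' i t) 0 1 2.
Proof. unfold minor3. simpl. unfold cos_prod, cos_prod', cos_prod''. ring. Qed.

Section One_sided.

Hypotheses (Hg : g t = 0) (Hg' : g' t = 0) (Hg'' : g'' t = 0).

Lemma tangent_field_3_vanish :
  tangent_field f g 3 t = 0 /\ tangent_field' f f' g g' 3 t = 0 /\
  tangent_field'' f f' f'' g g' g'' 3 t = 0.
Proof. simpl. rewrite Hg, Hg', Hg'', sin_0. repeat split; ring. Qed.

Lemma tangent_field_minor012 :
  minor3 (fun i => tangent_field f g i t) (fun i => tangent_field' f f' g g' i t)
    (fun i => tangent_field'' f f' f'' g g' g'' i t) 0 1 2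
  = cos (f t) * (f'' t + sin (f t) * cos (f t)) + 2 * f' t ^ 2 * sin (f t).
Proof.
  unfold minor3. simpl. unfold cos_prod, cos_prod', cos_prod''.
  rewrite Hg, Hg', Hg'', sin_0, cos_0.
  transitivity ((sin t ^ 2 + cos t ^ 2) * ((sin (f t) ^ 2 + cos (f t) ^ 2)
      * (2 * sin (f t) * f' t ^ 2 + cos (f t) * f'' t) + sin (f t) * cos (f t) ^ 2)); [ring|].
  rewrite !sin_cos_sqr. ring.
Qed.

End One_sided.
End Tangent_field_facts.

Lemma tangent_field_minor012_pos (f f' f'' g g' g'' : R -> R) (t : R) :
  g t = 0 -> g' t = 0 -> g'' t = 0 -> 0 < f t < 1 -> 0 < f'' t ->
  0 < minor3 (fun i => tangent_field f g i t) (fun i => tangent_field' f f' g g' i t)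
        (fun i => tangent_field'' f f' f'' g g' g'' i t) 0 1 2.
Proof.
  intros Hg Hg' Hg'' Hf Hf''. rewrite tangent_field_minor012 by assumption.
  pose proof PI2_1.
  assert (0 < cos (f t)) by (apply cos_gt_0; lra).
  assert (0 < sin (f t)) by (apply sin_gt_0; lra).
  pose proof (pow2_ge_0 (f' t)). nra.
Qed.

Lemma tangent_field_at_rest (f f' g g' : R -> R) (t : R) :
  f t = 0 -> f' t = 0 -> g t = 0 -> g' t = 0 ->
  tangent_field f g 0 t = cos t /\ tangent_field f g 1 t = sin t /\
  tangent_field f g 2 t = 0 /\ tangent_field f g 3 t = 0 /\
  tangent_field' f f' g g' 0 t = - sin t /\ tangent_field' f f' g g' 1 t = cos t /\
  tangent_field' f f' g g' 2 t = 0 /\ tangent_field' f f' g g' 3 t = 0.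
Proof.
  intros Hf Hf' Hg Hg'. simpl. unfold cos_prod, cos_prod'.
  rewrite Hf, Hf', Hg, Hg', sin_0, cos_0. repeat split; ring.
Qed.

(** * Frames of type F *)

Section Frame_algebra.

(* Pointwise data: [a], [b], [c] are T, T', T'', [z1], [z2] the next two frame vectors
   and [dx1] the derivative of the curvature [x1]. *)
Variables (a b c z1 z2 : nat -> R) (x1 dx1 x2 : R).
Hypotheses (Hb : forall j, (j < 4)%nat -> b j = x1 * z1 j)
  (Hc : forall j, (j < 4)%nat -> c j = dx1 * z1 j + x1 * (- x1 * a j + x2 * z2 j)).

Lemma frame_curvature_neq0 (j : nat) : (j < 4)%nat -> b j <> 0 -> x1 <> 0.
Proof. intros Hj Hbj Hx1. apply Hbj. rewrite Hb, Hx1 by exact Hj. ring. Qed.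

Lemma frame_torsion_neq0 (i j k : nat) :
  (i < 4)%nat -> (j < 4)%nat -> (k < 4)%nat -> minor3 a b c i j k <> 0 -> x2 <> 0.
Proof.
  intros Hi Hj Hk Hminor Hx2. apply Hminor. unfold minor3.
  rewrite (Hc i), (Hc j), (Hc k), (Hb i), (Hb j), (Hb k), Hx2 by assumption. ring.
Qed.

Lemma frame_normal_vanishes (k i j l : nat) :
  (k < 4)%nat -> (i < 4)%nat -> (j < 4)%nat -> (l < 4)%nat ->
  x1 <> 0 -> minor3 a b c i j l <> 0 -> a k = 0 -> b k = 0 -> c k = 0 -> z2 k = 0.
Proof.
  intros Hk Hi Hj Hl Hx1 Hminor Ha Hbk Hck.
  pose proof (frame_torsion_neq0 i j l Hi Hj Hl Hminor) as Hx2.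
  assert (Hz1 : z1 k = 0).
  { rewrite Hb in Hbk by exact Hk. destruct (Rmult_integral _ _ Hbk); tauto. }
  rewrite Hc, Hz1, Ha in Hck by exact Hk.
  assert (Hprod : x1 * x2 * z2 k = 0) by lra.
  destruct (Rmult_integral _ _ Hprod) as [H|H]; [|exact H].
  destruct (Rmult_integral _ _ H); tauto.
Qed.

Lemma frame_normal_not_unit :
  a 0%nat = 1 -> a 1%nat = 0 -> a 2%nat = 0 -> a 3%nat = 0 ->
  b 0%nat = 0 -> b 1%nat = 1 -> b 2%nat = 0 -> b 3%nat = 0 ->
  dot4 z2 a = 0 -> dot4 z2 z1 = 0 -> z2 2%nat = 0 -> z2 3%nat = 0 -> dot4 z2 z2 <> 1.
Proof.
  intros Ha0 Ha1 Ha2 Ha3 Hb0 Hb1 Hb2 Hb3 Hz2a Hz2z1 Hz22 Hz23.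
  assert (Hz1 : forall j, (j < 4)%nat -> b j = 0 -> z1 j = 0).
  { intros j Hj Hbj. rewrite Hb in Hbj by exact Hj. destruct (Rmult_integral _ _ Hbj) as [H|H];
      [|exact H].
    rewrite Hb, H in Hb1 by lia. lra. }
  assert (Hz11 : x1 * z1 1%nat = 1) by (rewrite <- Hb by lia; exact Hb1).
  unfold dot4 in *. rewrite Ha0, Ha1, Ha2, Ha3 in Hz2a.
  rewrite (Hz1 0%nat), (Hz1 2%nat), (Hz1 3%nat) in Hz2z1 by (lia || assumption).
  rewrite Hz22, Hz23. intro Hunit.
  assert (Hz20 : z2 0%nat = 0) by lra.
  assert (Hz21 : z2 1%nat * z1 1%nat = 0) by lra.
  destruct (Rmult_integral _ _ Hz21) as [H|H]; [|rewrite H in Hz11; lra].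
  rewrite Hz20, H in Hunit. lra.
Qed.

End Frame_algebra.

Lemma in_I_locally (a b : Rbar) (t : R) : in_I a b t -> locally t (in_I a b).
Proof. intros [Ha Hb]. apply (locally_interval _ t a b Ha Hb). now split. Qed.

Lemma perm_fixing_T_neq (p : nat -> nat) (i j : nat) :
  perm_fixing_T p -> (i < 4)%nat -> (j < 4)%nat -> i <> j -> p i <> p j.
Proof. intros [_ [_ Hinj]] Hi Hj Hij Heq. exact (Hij (Hinj i j Hi Hj Heq)). Qed.

Definition type_F_equations (a b : Rbar) (Z : nat -> nat -> R -> R) (p : nat -> nat)
    (x1 x2 x3 : R -> R) : Prop :=
  forall t, in_I a b t -> forall r j, (r < 4)%nat -> (j < 4)%nat ->
    Derive (Z (p r) j) t =
      Fmatrix (x1 t) (x2 t) (x3 t) r 0%nat * Z (p 0%nat) j t +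
      Fmatrix (x1 t) (x2 t) (x3 t) r 1%nat * Z (p 1%nat) j t +
      Fmatrix (x1 t) (x2 t) (x3 t) r 2%nat * Z (p 2%nat) j t +
      Fmatrix (x1 t) (x2 t) (x3 t) r 3%nat * Z (p 3%nat) j t.

Section Type_F_frame.

Variables (a b : Rbar) (gamma : nat -> R -> R) (Z : nat -> nat -> R -> R).
Variables (p : nat -> nat) (x1 x2 x3 : R -> R).
Hypotheses (HZ : is_frame a b gamma Z) (Hp : perm_fixing_T p) (Hx1 : smooth_on a b x1).
Hypothesis Hode : type_F_equations a b Z p x1 x2 x3.

Lemma frame_first_row_tangent (t : R) (j : nat) :
  in_I a b t -> (j < 4)%nat -> Z (p 0%nat) j t = tangent gamma j t.
Proof. intros Ht Hj. destruct Hp as [-> _]. now apply HZ. Qed.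

Lemma frame_Derive_tangent (t : R) (j : nat) : in_I a b t -> (j < 4)%nat ->
  Derive (tangent gamma j) t = x1 t * Z (p 1%nat) j t.
Proof.
  intros Ht Hj.
  rewrite <- (Derive_ext_loc (Z (p 0%nat) j)).
  - rewrite Hode by (assumption || lia). simpl. ring.
  - apply (filter_imp (in_I a b)); [|now apply in_I_locally].
    intros s Hs. now apply frame_first_row_tangent.
Qed.

Lemma frame_Derive2_tangent (t : R) (j : nat) : in_I a b t -> (j < 4)%nat ->
  Derive (Derive (tangent gamma j)) t
  = Derive x1 t * Z (p 1%nat) j t + x1 t * (- x1 t * tangent gamma j t + x2 t * Z (p 2%nat) j t).
Proof.
  intros Ht Hj.
  assert (Hp1 : (p 1%nat < 4)%nat) by (apply Hp; lia).
  rewrite (Derive_ext_loc _ (fun s => x1 s * Z (p 1%nat) j s)).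
  - rewrite Derive_mult by (apply (proj1 HZ _ _ Hp1 Hj 0%nat) || apply (Hx1 0%nat); exact Ht).
    rewrite Hode, <- (frame_first_row_tangent t j) by (assumption || lia). simpl. ring.
  - apply (filter_imp (in_I a b)); [|now apply in_I_locally].
    intros s Hs. now apply frame_Derive_tangent.
Qed.

End Type_F_frame.

(** * The curve *)

Definition flat_exp : R -> R := flat ((1, 0%nat) :: nil).
Definition flat_exp' : R -> R := flat (expinv_deriv ((1, 0%nat) :: nil)).
Definition flat_exp'' : R -> R := flat (expinv_deriv (expinv_deriv ((1, 0%nat) :: nil))).

Definition flat_exp_refl (t : R) : R := flat_exp (- t).
Definition flat_exp_refl' (t : R) : R := - flat_exp' (- t).
Definition flat_exp_refl'' (t : R) : R := flat_exp'' (- t).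

Lemma flat_exp_nonpos (t : R) :
  t <= 0 -> flat_exp t = 0 /\ flat_exp' t = 0 /\ flat_exp'' t = 0.
Proof. intros Ht. unfold flat_exp, flat_exp', flat_exp''. now rewrite !flat_nonpos. Qed.

Lemma flat_exp_refl_nonneg (t : R) :
  0 <= t -> flat_exp_refl t = 0 /\ flat_exp_refl' t = 0 /\ flat_exp_refl'' t = 0.
Proof.
  intros Ht. unfold flat_exp_refl, flat_exp_refl', flat_exp_refl''.
  destruct (flat_exp_nonpos (- t)) as (-> & -> & ->); [lra|]. repeat split; ring.
Qed.

Lemma flat_exp_bounds (t : R) : 0 <= flat_exp t < 1 /\ (0 < t -> 0 < flat_exp t).
Proof.
  unfold flat_exp. destruct (Rlt_dec 0 t) as [Ht|Ht].
  - rewrite flat_pos by exact Ht. simpl. rewrite Rmult_1_r, Rmult_1_l, Rplus_0_r.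
    pose proof (exp_pos (- / t)). pose proof (Rinv_0_lt_compat t Ht).
    rewrite <- exp_0. pose proof (exp_increasing (- / t) 0 ltac:(lra)). lra.
  - rewrite flat_nonpos by lra. lra.
Qed.

Lemma flat_exp''_pos (t : R) : 0 < t < 1 / 2 -> 0 < flat_exp'' t.
Proof.
  intros Ht. unfold flat_exp''. rewrite flat_pos by lra. simpl.
  assert (Hinv : 2 < / t).
  { apply Rmult_lt_reg_r with t; [lra|]. rewrite Rinv_l by lra. lra. }
  match goal with |- 0 < ?e => replace e with ((/ t) ^ 3 * exp (- / t) * (/ t - 2)) by ring end.
  apply Rmult_lt_0_compat; [apply Rmult_lt_0_compat; [apply pow_lt|apply exp_pos]|]; lra.
Qed.

Lemma is_derive_flat_exp (x : R) : is_derive flat_exp x (flat_exp' x).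
Proof. apply is_derive_flat. Qed.

Lemma is_derive_flat_exp' (x : R) : is_derive flat_exp' x (flat_exp'' x).
Proof. apply is_derive_flat. Qed.

Lemma is_derive_flat_exp_refl (x : R) : is_derive flat_exp_refl x (flat_exp_refl' x).
Proof. apply is_derive_reflect, is_derive_flat_exp. Qed.

Lemma is_derive_flat_exp_refl' (x : R) : is_derive flat_exp_refl' x (flat_exp_refl'' x).
Proof.
  unfold flat_exp_refl', flat_exp_refl''. eapply is_derive_eq.
  - apply is_derive_Ropp, is_derive_reflect, is_derive_flat_exp'.
  - ring.
Qed.

Definition curve_tangent (i : nat) : R -> R := tangent_field flat_exp flat_exp_refl i.
Definition curve_tangent' (i : nat) : R -> R :=
  tangent_field' flat_exp flat_exp' flat_exp_refl flat_exp_refl' i.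
Definition curve_tangent'' (i : nat) : R -> R :=
  tangent_field'' flat_exp flat_exp' flat_exp'' flat_exp_refl flat_exp_refl' flat_exp_refl'' i.

Definition curve (i : nat) (t : R) : R := RInt (curve_tangent i) 0 t.

Lemma flat_trig_curve_tangent (i : nat) : flat_trig (curve_tangent i).
Proof.
  assert (Hf : flat_trig flat_exp) by apply flat_trig_flat.
  assert (Hg : flat_trig flat_exp_refl) by now apply flat_trig_reflect.
  assert (Hp : flat_trig (cos_prod flat_exp flat_exp_refl))
    by (apply flat_trig_mult; now apply flat_trig_cos).
  destruct i as [|[|[|[|i]]]]; unfold curve_tangent; simpl.
  - apply flat_trig_mult; [apply flat_trig_cos, flat_trig_id|exact Hp].
  - apply flat_trig_mult; [apply flat_trig_sin, flat_trig_id|exact Hp].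
  - now apply flat_trig_sin.
  - now apply flat_trig_sin.
  - apply flat_trig_const.
Qed.

Lemma is_derive_curve (i : nat) (x : R) : is_derive (curve i) x (curve_tangent i x).
Proof.
  pose proof (fun y => flat_trig_continuous _ y (flat_trig_curve_tangent i)) as Hcont.
  apply is_derive_RInt with 0; [|apply Hcont].
  apply filter_forall. intro y. apply (RInt_correct (V := R_CompleteNormedModule)).
  apply (ex_RInt_continuous (V := R_CompleteNormedModule)). intros z _. apply Hcont.
Qed.

Lemma tangent_curve (i : nat) (t : R) : tangent curve i t = curve_tangent i t.
Proof. apply is_derive_unique, is_derive_curve. Qed.

Lemma Derive_tangent_curve (i : nat) (t : R) : Derive (tangent curve i) t = curve_tangent' i t.
Proof.
  rewrite (Derive_ext _ _ t (tangent_curve i)). apply is_derive_unique.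
  apply is_derive_tangent_field; auto using is_derive_flat_exp, is_derive_flat_exp_refl.
Qed.

Lemma Derive2_tangent_curve (i : nat) (t : R) :
  Derive (Derive (tangent curve i)) t = curve_tangent'' i t.
Proof.
  rewrite (Derive_ext _ _ t (Derive_tangent_curve i)). apply is_derive_unique.
  apply is_derive_tangent_field';
    auto using is_derive_flat_exp, is_derive_flat_exp', is_derive_flat_exp_refl,
      is_derive_flat_exp_refl'.
Qed.

Lemma curve_smooth (i : nat) : smooth_on m_infty p_infty (curve i).
Proof.
  intros [|n] t _; [exists (curve_tangent i t); apply is_derive_curve|].
  apply (ex_derive_ext (Derive_n (curve_tangent i) n)).
  - intro s. replace (S n) with (n + 1)%nat by lia. rewrite <- Derive_n_comp.
    apply Derive_n_ext. intro u. symmetry. apply is_derive_unique, is_derive_curve.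
  - apply flat_trig_smooth, flat_trig_curve_tangent.
Qed.

Lemma curve_arclength : arclength_curve m_infty p_infty curve.
Proof.
  split; [exact I|split; [intros i _; apply curve_smooth|]].
  intros t _. unfold dot4. rewrite !tangent_curve.
  apply tangent_field_unit.
  destruct (Rle_lt_dec t 0) as [Ht|Ht].
  - left. apply flat_exp_nonpos, Ht.
  - right. apply flat_exp_refl_nonneg. lra.
Qed.

Lemma cos_prod_curve_pos (t : R) : 0 < cos_prod flat_exp flat_exp_refl t.
Proof.
  unfold cos_prod, flat_exp_refl. pose proof PI2_1.
  destruct (flat_exp_bounds t) as [Ht _]. destruct (flat_exp_bounds (- t)) as [Ht' _].
  apply Rmult_lt_0_compat; apply cos_gt_0; lra.
Qed.

Lemma curve_two_regular : two_regular m_infty p_infty curve.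
Proof.
  intros t _.
  pose proof (tangent_field'_rotated flat_exp flat_exp' flat_exp_refl flat_exp_refl' t) as Hrot.
  pose proof (cos_prod_curve_pos t) as Hpos.
  destruct (Req_dec (curve_tangent' 0 t) 0) as [H0|H0].
  - exists 1%nat. split; [lia|]. rewrite Derive_tangent_curve. intro H1.
    unfold curve_tangent' in H0, H1. rewrite H0, H1 in Hrot. lra.
  - exists 0%nat. split; [lia|]. now rewrite Derive_tangent_curve.
Qed.

Lemma curve_right_side (t : R) : 0 < t < 1 / 2 ->
  curve_tangent 3 t = 0 /\ curve_tangent' 3 t = 0 /\ curve_tangent'' 3 t = 0 /\
  0 < minor3 (fun i => curve_tangent i t) (fun i => curve_tangent' i t)
        (fun i => curve_tangent'' i t) 0 1 2.
Proof.
  intros Ht. destruct (flat_exp_refl_nonneg t) as (Hg & Hg' & Hg''); [lra|].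
  destruct (tangent_field_3_vanish flat_exp flat_exp' flat_exp'' _ _ _ t Hg Hg' Hg'')
    as (H0 & H1 & H2).
  repeat split; [exact H0|exact H1|exact H2|].
  apply tangent_field_minor012_pos; auto using flat_exp''_pos.
  destruct (flat_exp_bounds t) as [Hb Hpos]. split; [apply Hpos|]; lra.
Qed.

Lemma curve_left_side (t : R) : - (1 / 2) < t < 0 ->
  curve_tangent 2 t = 0 /\ curve_tangent' 2 t = 0 /\ curve_tangent'' 2 t = 0 /\
  0 < minor3 (fun i => curve_tangent i t) (fun i => curve_tangent' i t)
        (fun i => curve_tangent'' i t) 0 1 3.
Proof.
  intros Ht. destruct (flat_exp_nonpos t) as (Hf & Hf' & Hf''); [lra|].
  destruct (tangent_field_3_vanish flat_exp_refl flat_exp_refl' flat_exp_refl'' _ _ _ t Hf Hf' Hf'')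
    as (H0 & H1 & H2).
  repeat split; [exact H0|exact H1|exact H2|].
  unfold curve_tangent, curve_tangent', curve_tangent''. rewrite tangent_field_minor013_swap.
  apply tangent_field_minor012_pos; [exact Hf|exact Hf'|exact Hf''| |apply flat_exp''_pos; lra].
  unfold flat_exp_refl. destruct (flat_exp_bounds (- t)) as [Hb Hpos].
  split; [apply Hpos|]; lra.
Qed.

Lemma curve_tangent_at_0 :
  curve_tangent 0 0 = 1 /\ curve_tangent 1 0 = 0 /\ curve_tangent 2 0 = 0 /\ curve_tangent 3 0 = 0 /\
  curve_tangent' 0 0 = 0 /\ curve_tangent' 1 0 = 1 /\ curve_tangent' 2 0 = 0 /\
  curve_tangent' 3 0 = 0.
Proof.
  destruct (flat_exp_nonpos 0) as (Hf & Hf' & _); [lra|].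
  destruct (flat_exp_refl_nonneg 0) as (Hg & Hg' & _); [lra|].
  destruct (tangent_field_at_rest _ _ _ _ 0 Hf Hf' Hg Hg') as (H0 & H1 & H2 & H3 & H4 & H5 & H6 & H7).
  unfold curve_tangent, curve_tangent'.
  rewrite H0, H1, H2, H3, H4, H5, H6, H7, sin_0, cos_0. repeat split; ring.
Qed.

Lemma in_I_whole_line (t : R) : in_I m_infty p_infty t.
Proof. now split. Qed.

Section Curve_frame.

Variables (Z : nat -> nat -> R -> R) (p : nat -> nat) (x1 x2 x3 : R -> R).
Hypotheses (HZ : is_frame m_infty p_infty curve Z) (Hp : perm_fixing_T p)
  (Hx1 : smooth_on m_infty p_infty x1) (Hode : type_F_equations m_infty p_infty Z p x1 x2 x3).

Lemma curve_frame_tangent' (t : R) (j : nat) :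
  (j < 4)%nat -> curve_tangent' j t = x1 t * Z (p 1%nat) j t.
Proof.
  intros Hj. rewrite <- Derive_tangent_curve.
  exact (frame_Derive_tangent _ _ curve Z p x1 x2 x3 HZ Hp Hode t j (in_I_whole_line t) Hj).
Qed.

Lemma curve_frame_tangent'' (t : R) (j : nat) : (j < 4)%nat ->
  curve_tangent'' j t = Derive x1 t * Z (p 1%nat) j t
    + x1 t * (- x1 t * curve_tangent j t + x2 t * Z (p 2%nat) j t).
Proof.
  intros Hj. rewrite <- Derive2_tangent_curve, <- tangent_curve.
  exact (frame_Derive2_tangent _ _ curve Z p x1 x2 x3 HZ Hp Hx1 Hode t j (in_I_whole_line t) Hj).
Qed.

Lemma curve_frame_curvature_neq0 (t : R) : x1 t <> 0.
Proof.
  destruct (curve_two_regular t (in_I_whole_line t)) as [j [Hj Hneq]].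
  rewrite Derive_tangent_curve in Hneq.
  exact (frame_curvature_neq0 _ _ _ (curve_frame_tangent' t) j Hj Hneq).
Qed.

Lemma curve_frame_normal_right (t : R) : 0 < t < 1 / 2 -> Z (p 2%nat) 3 t = 0.
Proof.
  intros Ht. destruct (curve_right_side t Ht) as (Ha & Hb & Hc & Hminor).
  apply (frame_normal_vanishes (fun i => curve_tangent i t) (fun i => curve_tangent' i t)
           (fun i => curve_tangent'' i t) (fun j => Z (p 1%nat) j t) (fun j => Z (p 2%nat) j t)
           (x1 t) (Derive x1 t) (x2 t) (curve_frame_tangent' t) (curve_frame_tangent'' t)
           3 0 1 2); try lia; try lra.
  apply curve_frame_curvature_neq0.
Qed.

Lemma curve_frame_normal_left (t : R) : - (1 / 2) < t < 0 -> Z (p 2%nat) 2 t = 0.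
Proof.
  intros Ht. destruct (curve_left_side t Ht) as (Ha & Hb & Hc & Hminor).
  apply (frame_normal_vanishes (fun i => curve_tangent i t) (fun i => curve_tangent' i t)
           (fun i => curve_tangent'' i t) (fun j => Z (p 1%nat) j t) (fun j => Z (p 2%nat) j t)
           (x1 t) (Derive x1 t) (x2 t) (curve_frame_tangent' t) (curve_frame_tangent'' t)
           2 0 1 3); try lia; try lra.
  apply curve_frame_curvature_neq0.
Qed.

Lemma curve_frame_normal_at_0 : Z (p 2%nat) 2 0 = 0 /\ Z (p 2%nat) 3 0 = 0.
Proof.
  assert (Hp2 : (p 2%nat < 4)%nat) by (apply Hp; lia).
  assert (Hcont : forall j, (j < 4)%nat -> continuous (Z (p 2%nat) j) 0).
  { intros j Hj. apply (ex_derive_continuous (K := R_AbsRing) (V := R_NormedModule)).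
    exact (proj1 HZ _ _ Hp2 Hj 0%nat 0 (in_I_whole_line 0)). }
  split; apply continuous_eq0_of_adherent; try (apply Hcont; lia); intros eps Heps;
    set (y := Rmin eps (1 / 2) / 2);
    assert (0 < Rmin eps (1 / 2)) by (apply Rmin_pos; lra);
    pose proof (Rmin_l eps (1 / 2)); pose proof (Rmin_r eps (1 / 2)).
  - exists (- y). split; [rewrite Rminus_0_r, Rabs_Ropp, Rabs_right; unfold y; lra|].
    apply curve_frame_normal_left. unfold y. lra.
  - exists y. split; [rewrite Rminus_0_r, Rabs_right; unfold y; lra|].
    apply curve_frame_normal_right. unfold y. lra.
Qed.

Lemma curve_frame_absurd : False.
Proof.
  assert (Hp1 : (p 1%nat < 4)%nat) by (apply Hp; lia).
  assert (Hp2 : (p 2%nat < 4)%nat) by (apply Hp; lia).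
  destruct HZ as [_ [Horth Hrow0]].
  assert (Hrow0_at_0 : forall j, (j < 4)%nat -> Z 0%nat j 0 = curve_tangent j 0).
  { intros j Hj. rewrite Hrow0 by (exact (in_I_whole_line 0) || exact Hj). apply tangent_curve. }
  pose proof (Horth 0 (in_I_whole_line 0) (p 2%nat) 0%nat Hp2 ltac:(lia)) as Hz2a.
  pose proof (Horth 0 (in_I_whole_line 0) (p 2%nat) (p 1%nat) Hp2 Hp1) as Hz2z1.
  pose proof (Horth 0 (in_I_whole_line 0) (p 2%nat) (p 2%nat) Hp2 Hp2) as Hz2z2.
  rewrite Nat.eqb_refl in Hz2z2.
  rewrite (proj2 (Nat.eqb_neq _ _)) in Hz2a
    by (destruct Hp as [Hp0 _]; rewrite <- Hp0; apply perm_fixing_T_neq; auto; lia).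
  rewrite (proj2 (Nat.eqb_neq _ _)) in Hz2z1 by (apply perm_fixing_T_neq; auto; lia).
  destruct curve_tangent_at_0 as (Ha0 & Ha1 & Ha2 & Ha3 & Hb0 & Hb1 & Hb2 & Hb3).
  destruct curve_frame_normal_at_0 as [Hz22 Hz23].
  apply (frame_normal_not_unit (fun k => Z 0%nat k 0) (fun i => curve_tangent' i 0)
           (fun j => Z (p 1%nat) j 0) (fun j => Z (p 2%nat) j 0) (x1 0) (curve_frame_tangent' 0));
    try rewrite Hrow0_at_0 by lia; assumption.
Qed.

End Curve_frame.

Theorem theorem3 :
  exists (a b : Rbar) (gamma : nat -> R -> R),
    arclength_curve a b gamma /\ two_regular a b gamma /\
    ~ (exists Z : nat -> nat -> R -> R, is_frame a b gamma Z /\ type_F a b Z).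
Proof.
  exists m_infty, p_infty, curve.
  split; [exact curve_arclength|split; [exact curve_two_regular|]].
  intros [Z [HZ [p [x1 [x2 [x3 [Hp [Hx1 [_ [_ Hode]]]]]]]]]].
  exact (curve_frame_absurd Z p x1 x2 x3 HZ Hp Hx1 Hode).
Qed.
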